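(* If a finite connected interval graph $G$ is balanced and $p$-critical (for some $p\ge1$), then $G$ has exactly one basepoint.
   Context: An interval graph is a finite simple graph whose vertices can be assigned (closed, bounded) real intervals $I_v$ so that $v,w$ are adjacent iff $I_v\cap I_w\ne\emptyset$. For such a representation $\alpha$, $\mathrm{imp}_\alpha(z)$ is the number of intervals $I_w$, $w\ne z$, with $I_w\subseteq I_z$; $\mathrm{imp}(\alpha)=\max_z\mathrm{imp}_\alpha(z)$; and the impropriety $\mathrm{imp}(G)$ is the minimum of $\mathrm{imp}(\alpha)$ over all representations. A local component at $z$ is a connected component of $G\setminus\{z\}$; it is exterior iff it contains a vertex not adjacent to $z$. If $z$ has $n$ local components, $\mathrm{wt}(z)$ is the sum of the $n-2$ smallest orders among the non-exterior local components at $z$ ($0$ if $n\le2$), and $\mathrm{wt}(G)=\max_z \mathrm{wt}(z)$. $G$ is balanced iff $\mathrm{wt}(G)=\mathrm{imp}(G)$. If $G$ is balanced, a basepoint of $G$ is a vertex $z$ with $\mathrm{wt}(z)=\mathrm{imp}(G)$. For $p>0$, $G$ is $p$-critical iff $\mathrm{imp}(G)=p$ and every proper induced subgraph of $G$ has impropriety strictly less than $p$. *)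

From Stdlib Require Import Reals.
From mathcomp Require Import all_boot.

Set Implicit Arguments.
Unset Strict Implicit.
Unset Printing Implicit Defensive.

Definition Rleb (a b : R) : bool := if Rle_dec a b then true else false.

(* A graph is [e : rel T] on a finite type [T] (symmetric, irreflexive).
   Induced subgraph on a vertex set [S] is handled by relativising to [S]. *)
Definition is_rep (T : finType) (S : {set T}) (e : rel T) (l r : T -> R) : Prop :=
  (forall v, v \in S -> Rle (l v) (r v)) /\
  (forall v w, v \in S -> w \in S -> v != w ->
     (e v w <-> exists x : R, (Rle (l v) x /\ Rle x (r v)) /\ (Rle (l w) x /\ Rle x (r w)))).

(* I_w is contained in I_z (for nonempty closed intervals) *)
Definition sub_int (T : finType) (l r : T -> R) (w z : T) : bool :=
  Rleb (l z) (l w) && Rleb (r w) (r z).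

Definition imp_at (T : finType) (S : {set T}) (l r : T -> R) (z : T) : nat :=
  #|[set w in S | (w != z) && sub_int l r w z]|.

Definition imp_rep (T : finType) (S : {set T}) (l r : T -> R) : nat :=
  \max_(z in S) imp_at S l r z.

Definition has_imp (T : finType) (S : {set T}) (e : rel T) (p : nat) : Prop :=
  (exists l r, is_rep S e l r /\ imp_rep S l r = p) /\
  (forall l r, is_rep S e l r -> p <= imp_rep S l r).

Definition interval_graph (T : finType) (e : rel T) : Prop :=
  exists l r, is_rep [set: T] e l r.

Definition connected_graph (T : finType) (e : rel T) : Prop :=
  forall x y, connect e x y.

Definition del_rel (T : finType) (e : rel T) (z : T) : rel T :=
  fun x y => [&& e x y, x != z & y != z].

Definition local_comp (T : finType) (e : rel T) (z x : T) : {set T} :=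
  [set y | (y != z) && connect (del_rel e z) x y].

Definition local_comps (T : finType) (e : rel T) (z : T) : {set {set T}} :=
  [set local_comp e z x | x in [set~ z]].

Definition exterior (T : finType) (e : rel T) (z : T) (C : {set T}) : bool :=
  [exists y in C, ~~ e z y].

Definition wt (T : finType) (e : rel T) (z : T) : nat :=
  sumn (take (#|local_comps e z| - 2)
    (sort leq [seq #|pred_of_set C| | C : {set T} <- enum [set C in local_comps e z | ~~ exterior e z C]])).

Definition wtG (T : finType) (e : rel T) : nat := \max_(z : T) wt e z.

Definition balanced (T : finType) (e : rel T) : Prop := has_imp [set: T] e (wtG e).

Definition basepoint (T : finType) (e : rel T) (z : T) : Prop :=
  balanced e /\ has_imp [set: T] e (wt e z).

Definition critical (T : finType) (e : rel T) (p : nat) : Prop :=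
  0 < p /\ has_imp [set: T] e p /\
  (forall S : {set T}, S \proper [set: T] -> forall q, has_imp S e q -> q < p).

From Stdlib Require Import Reals Lra Classical Wf_nat.
From mathcomp Require Import all_boot.

Set Implicit Arguments.
Unset Strict Implicit.
Unset Printing Implicit Defensive.

(* Existence is immediate: a vertex z of maximal weight has wt z = wt G = p.
   For uniqueness, let z' <> z be another vertex with wt z' = p > 0.  Then z'
   has at least three local components, and the local component Q at z
   containing z' has at least three vertices.  If Q were exterior, it would
   carry an "arm" a - b (a adjacent to z, b not); in any interval
   representation the interval of a contains an endpoint of I_z.  Deleting
   all of Q except a, b (and likewise for a second exterior component, if
   any) leaves a proper induced subgraph in which every non-exterior local
   component at z still lies nested in I_z, except possibly one component
   using the endpoint left free; a counting argument then gives
   wt z <= imp, contradicting p-criticality.  Hence Q is non-exterior, which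
   forces G - z' to be connected, i.e. wt z' = 0: a contradiction. *)

Lemma sumn_take_le (L : seq nat) k : sumn (take k L) <= sumn L.
Proof. by rewrite -{2}(cat_take_drop k L) sumn_cat leq_addr. Qed.

(* The sum of the k smallest entries of L, plus one more entry x of L, is at
   most the sum of L: x is bounded by the largest entry, which is not among
   the k smallest ones when k < size L. *)
Lemma sumn_take_sort_add (L : seq nat) k x :
  k < size L -> x \in L -> sumn (take k (sort leq L)) + x <= sumn L.
Proof.
move=> hk hx; set s := sort leq L.
have ps : perm_eq s L by rewrite perm_sort perm_refl.
have ss : sorted leq s by apply: sort_sorted; exact: leq_total.
have xs : x \in s by rewrite (perm_mem ps).
have [hs hsz] : size s = size L /\ 0 < size s by rewrite (perm_size ps) (leq_ltn_trans _ hk).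
rewrite -(perm_sumn ps) -{2}(cat_take_drop k s) sumn_cat leq_add2l.
have x_le_last : x <= nth 0 s (size s).-1.
  rewrite -{1}(nth_index 0 xs).
  apply: (sorted_leq_nth leq_trans leqnn 0 ss); rewrite ?inE ?index_mem ?prednK //.
  by rewrite -ltnS prednK // index_mem.
apply: (leq_trans x_le_last); rewrite -(subnKC (_ : k <= (size s).-1)); last first.
  by rewrite -ltnS prednK // hs.
rewrite -nth_drop; elim: (drop k s) (_ - k) => [|a t IH] [|i] //=.
- exact: leq_addr.
- exact: leq_trans (IH i) (leq_addl _ _).
Qed.

Lemma path_leaves (T : finType) (r : rel T) (P : pred T) u s :
  path r u s -> P u -> ~~ P (last u s) ->
  exists a b, [/\ r a b, P a, ~~ P b & connect r u a].
Proof.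
elim: s u => [|c s IH] u /=; first by move=> _ ->.
case/andP => huc hs pu hl; case pc: (P c).
  have [a [b [h1 h2 h3 h4]]] := IH c hs pc hl.
  by exists a, b; split => //; exact: connect_trans (connect1 huc) h4.
by exists u, c; rewrite pc; split => //; exact: connect0.
Qed.

Lemma connect_transfer (T : finType) (r r' : rel T) (P : T -> Prop) x :
  (forall a b, P a -> r a b -> r' a b /\ P b) -> P x ->
  forall y, connect r x y -> connect r' x y.
Proof.
move=> hP px y /connectP [s hs ->]; elim: s x px hs => [|a s IH] x px /=.
  by move=> _; exact: connect0.
case/andP => hxa hs; have [h1 h2] := hP _ _ px hxa.
exact: (connect_trans (connect1 h1) (IH a h2 hs)).
Qed.

Section LocalComponents.
Variables (T : finType) (e : rel T).
Hypothesis esym : symmetric e.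

Lemma del_rel_sym z : symmetric (del_rel e z).
Proof.
move=> x y; rewrite /del_rel esym.
by case: (x != z); case: (y != z); rewrite ?andbF ?andbT.
Qed.

Lemma del_connect_sym z : connect_sym (del_rel e z).
Proof. exact: sym_connect_sym (del_rel_sym z). Qed.

Lemma in_local_comp z x y :
  (y \in local_comp e z x) = (y != z) && connect (del_rel e z) x y.
Proof. by rewrite inE. Qed.

Lemma local_comp_eq z x y :
  connect (del_rel e z) x y -> local_comp e z x = local_comp e z y.
Proof.
by move=> hxy; apply/setP => w; rewrite !in_local_comp (same_connect (del_connect_sym z) hxy).
Qed.

Lemma local_comp_self z x : x != z -> x \in local_comp e z x.
Proof. by move=> h; rewrite in_local_comp h connect0. Qed.

Lemma local_compsP z C :
  C \in local_comps e z -> exists2 c, c != z & C = local_comp e z c.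
Proof. by case/imsetP => c; rewrite !inE => h ->; exists c. Qed.

Lemma local_comp_in z c : c != z -> local_comp e z c \in local_comps e z.
Proof. by move=> h; apply: imset_f; rewrite !inE. Qed.

Lemma local_comps_neq z C w : C \in local_comps e z -> w \in C -> w != z.
Proof. by case/local_compsP => c _ ->; rewrite in_local_comp => /andP []. Qed.

Lemma local_comps_of z C w : C \in local_comps e z -> w \in C -> C = local_comp e z w.
Proof.
by case/local_compsP => c _ ->; rewrite in_local_comp => /andP [_ h]; exact: local_comp_eq.
Qed.

Lemma same_local_comp z C C' w w' : C \in local_comps e z -> C' \in local_comps e z ->
  w \in C -> w' \in C' -> w = w' \/ e w w' -> C = C'.
Proof.
move=> hC hC' hw hw' hor; rewrite (local_comps_of hC hw) (local_comps_of hC' hw').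
apply: local_comp_eq; case: hor => [->|h]; first exact: connect0.
by apply: connect1; rewrite /del_rel h (local_comps_neq hC hw) (local_comps_neq hC' hw').
Qed.

Lemma nonexteriorP z (C : {set T}) : ~~ exterior e z C -> forall w, w \in C -> e z w.
Proof. by rewrite negb_exists_in => /forall_inP h w /h; rewrite negbK. Qed.

Lemma exteriorP z (C : {set T}) y : y \in C -> ~~ e z y -> exterior e z C.
Proof. by move=> hy hn; apply/existsP; exists y; rewrite hy. Qed.

End LocalComponents.

Definition nonext_comps (T : finType) (e : rel T) (z : T) : {set {set T}} :=
  [set C in local_comps e z | ~~ exterior e z C].

Section Weight.
Variables (T : finType) (e : rel T).

Lemma wtE z : wt e z =
  sumn (take (#|local_comps e z| - 2) (sort leq [seq #|pred_of_set C| | C : {set T} <- enum (nonext_comps e z)])).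
Proof. by []. Qed.

Lemma sumn_comp_sizes (F : {set {set T}}) : sumn [seq #|pred_of_set C| | C : {set T} <- enum F] = \sum_(C in F) #|C|.
Proof. by rewrite sumnE big_map big_enum. Qed.

Lemma wt_pos_comps z : 0 < wt e z -> 2 < #|local_comps e z|.
Proof.
rewrite wtE; case: (leqP #|local_comps e z| 2) => // h.
have -> : #|local_comps e z| - 2 = 0 by apply/eqP; rewrite subn_eq0.
by rewrite take0.
Qed.

Lemma wt_le_nonext_sum z : wt e z <= \sum_(C in nonext_comps e z) #|C|.
Proof.
rewrite wtE -sumn_comp_sizes; apply: leq_trans (sumn_take_le _ _) _.
by rewrite (perm_sumn (permEl (perm_sort _ _))).
Qed.

Lemma wt_add_le_nonext_sum z C0 :
  #|local_comps e z| <= #|nonext_comps e z| + 1 -> C0 \in nonext_comps e z ->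
  wt e z + #|C0| <= \sum_(C in nonext_comps e z) #|C|.
Proof.
move=> hcard hC0; rewrite wtE -sumn_comp_sizes.
apply: sumn_take_sort_add; last by apply/mapP; exists C0; rewrite ?mem_enum.
have hpos : 0 < #|nonext_comps e z| by apply/card_gt0P; exists C0.
rewrite size_map -cardE; apply: leq_ltn_trans (leq_sub2r 2 hcard) _.
by move: hpos; case: #|_| => [|[|n]] //= _; rewrite addn1 subSS subn1 ltnSn.
Qed.

End Weight.

Lemma reach_neighbor (T : finType) (e : rel T) x z : x != z -> connect e x z ->
  exists u, connect (del_rel e z) x u /\ e u z.
Proof.
move=> hxz /connectP [s hs hl]; elim: s x hxz hs hl => [|a s IH] x hxz /=.
  by move=> _ h; rewrite h eqxx in hxz.
case/andP => hxa hs hl; case: (eqVneq a z) => haz.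
  by exists x; split; [exact: connect0 | rewrite -haz].
have [u [h1 h2]] := IH a haz hs hl.
exists u; split => //; apply: connect_trans h1; apply: connect1.
by rewrite /del_rel hxa hxz haz.
Qed.

Definition arm (T : finType) (e : rel T) (z : T) (Q : {set T}) (a b : T) : Prop :=
  [/\ a \in Q, b \in Q, e z a, ~~ e z b & e a b].

Section Connected.
Variables (T : finType) (e : rel T).
Hypotheses (esym : symmetric e) (hconn : connected_graph e).

(* Every exterior local component carries an arm: walk from a far vertex
   back towards z and stop at the first neighbour of z. *)
Lemma exterior_arm z Q y : Q \in local_comps e z -> y \in Q -> ~~ e z y ->
  exists a b, arm e z Q a b.
Proof.
move=> hQ hy nzy; have yz := local_comps_neq hQ hy.
have [u [hyu euz]] := reach_neighbor yz (hconn y z).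
have /connectP [s hs hl] : connect (del_rel e z) u y by rewrite (del_connect_sym esym).
have zu : e z u by rewrite esym.
have [a [b [dab za nzb hua]]] := path_leaves hs zu (P := e z) (ltac:(by rewrite -hl)).
move: dab; rewrite /del_rel => /and3P [eab az bz].
have QE := local_comps_of esym hQ hy.
have hya := connect_trans hyu hua.
exists a, b; split => //; rewrite QE in_local_comp ?az ?bz //=.
apply: connect_trans hya (connect1 _); by rewrite /del_rel eab az bz.
Qed.

Lemma del_connect_swap z z' w : z' != z -> w != z ->
  ~~ connect (del_rel e z) w z' -> connect (del_rel e z') w z.
Proof.
move=> zz' wz hw; have [u [hwu euz]] := reach_neighbor wz (hconn w z).
have avoid b : connect (del_rel e z) w b -> b != z'.
  by apply: contraTneq => ->.
have hwu' : connect (del_rel e z') w u.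
  apply: (connect_transfer (P := fun a => connect (del_rel e z) w a) _ (connect0 _ w) hwu).
  move=> a b ha hab; have hb := connect_trans ha (connect1 hab).
  split=> //; move: hab => /and3P [eab _ _].
  by rewrite /del_rel eab (avoid a ha) (avoid b hb).
apply: connect_trans hwu' (connect1 _).
by rewrite /del_rel euz (avoid u hwu) eq_sym zz'.
Qed.

Lemma local_comp_cross z z' w : z' != z -> w != z' -> w \notin local_comp e z' z ->
  w \in local_comp e z z'.
Proof.
move=> zz' wz' hw.
have wz : w != z by apply: contraNneq hw => ->; rewrite local_comp_self // eq_sym.
have nc : ~~ connect (del_rel e z') w z.
  by move: hw; rewrite in_local_comp wz' /= (del_connect_sym esym).
have := del_connect_swap (z := z') (z' := z) (ltac:(by rewrite eq_sym)) wz' nc.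
by rewrite in_local_comp wz (del_connect_sym esym).
Qed.

(* If the local component at z containing z' consists of neighbours of z,
   then G - z' is connected, so z' has weight 0. *)
Lemma wt_nonext_cross z z' : z' != z ->
  ~~ exterior e z (local_comp e z z') -> wt e z' = 0.
Proof.
move=> zz' hQ; suff hcard : #|local_comps e z'| <= 1.
  by apply/eqP; rewrite eqn0Ngt; apply/negP => /wt_pos_comps; rewrite ltnNge (leq_trans hcard).
apply: leq_trans (_ : #|[set local_comp e z' z]| <= 1); last by rewrite cards1.
apply: subset_leq_card; apply/subsetP => C /local_compsP [w wz' ->]; rewrite inE.
apply/eqP; apply: local_comp_eq esym _ _ _ _.
case: (eqVneq w z) => [->|wz]; first exact: connect0.
case hwQ: (w \in local_comp e z z').
  apply: connect1; rewrite /del_rel wz' eq_sym zz' andbT.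
  by rewrite esym (nonexteriorP hQ hwQ).
apply: del_connect_swap => //.
by move: hwQ; rewrite in_local_comp wz /= (del_connect_sym esym) => ->.
Qed.

(* If z' has positive weight, the local component at z containing z'
   contains z' together with vertices of two further local components at z'. *)
Lemma comp_of_heavy_card z z' : z' != z -> 0 < wt e z' ->
  2 < #|local_comp e z z'|.
Proof.
move=> zz' hpos; set P := local_comp e z' z.
have hP : P \in local_comps e z' by apply: local_comp_in; rewrite eq_sym.
have : 1 < #|local_comps e z' :\ P| by move: (wt_pos_comps hpos); rewrite (cardsD1 P) hP.
case/card_gt1P => C1 [C2 []]; rewrite !inE => /andP [C1P hC1] /andP [C2P hC2] C12.
have [w1 w1z C1E] := local_compsP hC1; have [w2 w2z C2E] := local_compsP hC2.
have hw1 : w1 \in C1 by rewrite C1E local_comp_self.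
have hw2 : w2 \in C2 by rewrite C2E local_comp_self.
have outP C w : C \in local_comps e z' -> C != P -> w \in C -> w \notin P.
  move=> hC hCP hwC; apply: contra hCP => hwP.
  by rewrite (same_local_comp esym hC hP hwC hwP (or_introl erefl)).
apply/card_gt2P; exists w1, w2, z'; split; split.
- exact: local_comp_cross (outP _ _ hC1 C1P hw1).
- exact: local_comp_cross (outP _ _ hC2 C2P hw2).
- exact: local_comp_self.
- by apply: contra C12 => /eqP E; rewrite (same_local_comp esym hC1 hC2 hw1 hw2 (or_introl E)).
- exact: w2z.
- by rewrite eq_sym.
Qed.

End Connected.

Lemma RlebP a b : Rleb a b = true <-> Rle a b.
Proof. by rewrite /Rleb; case: Rle_dec. Qed.

Definition covers (T : Type) (l r : T -> R) (w : T) (t : R) : Prop :=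
  Rle (l w) t /\ Rle t (r w).

Definition share_point (T : Type) (l r : T -> R) (u v : T) : Prop :=
  exists t, covers l r u t /\ covers l r v t.

Definition covers_end (T : Type) (l r : T -> R) (z x : T) : Prop :=
  covers l r x (l z) \/ covers l r x (r z).

Lemma covers_end_pigeon (T : Type) (l r : T -> R) z u v w :
  covers_end l r z u -> covers_end l r z v -> covers_end l r z w ->
  [\/ share_point l r u v, share_point l r v w | share_point l r u w].
Proof.
by move=> [hu|hu] [hv|hv] [hw|hw];
  solve [ apply: Or31; eexists; split; eassumption
        | apply: Or32; eexists; split; eassumption
        | apply: Or33; eexists; split; eassumption ].
Qed.

Section Representation.
Variables (T : finType) (e : rel T) (S : {set T}) (l r : T -> R).
Hypothesis hrep : is_rep S e l r.

Lemma rep_adj v w : v \in S -> w \in S -> v != w -> e v w <-> share_point l r v w.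
Proof.
case: hrep => _ h hv hw hvw; rewrite (h v w hv hw hvw).
by split=> [] [t [[? ?] [? ?]]]; exists t.
Qed.

Lemma rep_le v : v \in S -> Rle (l v) (r v).
Proof. by case: hrep => h _; exact: h. Qed.

Lemma share_point_adj w w' : w \in S -> w' \in S -> share_point l r w w' -> w = w' \/ e w w'.
Proof.
move=> hw hw' hs; case: (eqVneq w w') => h; [by left | right].
exact/(rep_adj hw hw' h).
Qed.

Lemma neighbor_nested_or_covers z w : z \in S -> w \in S -> w != z -> e z w ->
  sub_int l r w z \/ covers_end l r z w.
Proof.
move=> hz hw hwz hzw; have [x [[h1 h2] [h3 h4]]] := proj1 (rep_adj hz hw (ltac:(by rewrite eq_sym))) hzw.
rewrite /sub_int /covers_end /covers.
case E1: (Rleb (l z) (l w)); case E2: (Rleb (r w) (r z)) => /=; [by left | right..].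
- move: E1 => /RlebP E1; have : ~ Rle (r w) (r z) by move=> /RlebP; rewrite E2.
  by right; lra.
- have : ~ Rle (l z) (l w) by move=> /RlebP; rewrite E1.
  by left; lra.
- have : ~ Rle (l z) (l w) by move=> /RlebP; rewrite E1.
  by left; lra.
Qed.

(* The middle vertex x of a path z - x - y with z, y non-adjacent contains an
   endpoint of I_z: I_x meets I_z and I_y while I_z and I_y are disjoint. *)
Lemma arm_covers_end z x y : z \in S -> x \in S -> y \in S -> y != z -> x != z -> x != y ->
  ~~ e z y -> e z x -> e x y -> covers_end l r z x.
Proof.
move=> hz hx hy hyz hxz hxy nzy ezx exy.
have [p1 [[a1 a2] [a3 a4]]] := proj1 (rep_adj hz hx (ltac:(by rewrite eq_sym))) ezx.
have [p2 [[b1 b2] [b3 b4]]] := proj1 (rep_adj hx hy hxy) exy.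
have lz := rep_le hz; have ly := rep_le hy.
have disj : ~ share_point l r z y.
  by move=> /(rep_adj hz hy (ltac:(by rewrite eq_sym))) h; rewrite h in nzy.
rewrite /covers_end /covers.
case: (Rle_dec (l y) (r z)) => c1; case: (Rle_dec (l z) (r y)) => c2; try by [left; lra | right; lra].
exfalso; apply: disj; case: (Rle_dec (l y) (l z)) => c3.
- by exists (l z); rewrite /covers; lra.
- by exists (l y); rewrite /covers; lra.
Qed.

End Representation.

Definition nested_in (T : finType) (S : {set T}) (l r : T -> R) (z : T) : {set T} :=
  [set w in S | (w != z) && sub_int l r w z].

Section Bound.
Variables (T : finType) (e : rel T) (S : {set T}) (l r : T -> R) (z : T).
Hypotheses (esym : symmetric e) (eirr : irreflexive e).
Hypotheses (hrep : is_rep S e l r) (hz : z \in S).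

(* Local components are disjoint, so components made of nested vertices
   contribute their whole order to imp_at z. *)
Lemma nested_comps_sum_le (F : {set {set T}}) : F \subset local_comps e z ->
  (forall C, C \in F -> C \subset nested_in S l r z) ->
  \sum_(C in F) #|C| <= imp_at S l r z.
Proof.
move=> hF hnest.
have triv : trivIset F.
  apply/trivIsetP => C C' hC hC' hne; apply/pred0P => w /=; apply/negP => /andP [h1 h2].
  have E := same_local_comp esym (subsetP hF C hC) (subsetP hF C' hC') h1 h2 (or_introl erefl).
  by rewrite E eqxx in hne.
rewrite (eqP triv); apply: subset_leq_card; apply/subsetP => w /bigcupP [C hC hw].
exact: subsetP (hnest C hC) w hw.
Qed.

Lemma nonext_covers_end C w : C \in nonext_comps e z -> C \subset S -> w \in C ->
  w \notin nested_in S l r z -> w \in S /\ covers_end l r z w.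
Proof.
rewrite inE => /andP [hC hne] hCS hw hwn; have wS := subsetP hCS w hw.
split=> //; have wz := local_comps_neq hC hw.
case: (neighbor_nested_or_covers hrep hz wS wz (nonexteriorP hne hw)) => // hs.
by move: hwn; rewrite inE wS wz hs.
Qed.

Lemma share_point_same_comp C C' w w' : C \in local_comps e z -> C' \in local_comps e z ->
  w \in C -> w' \in C' -> w \in S -> w' \in S -> share_point l r w w' -> C = C'.
Proof.
move=> hC hC' hw hw' wS w'S /(share_point_adj hrep wS w'S).
exact: (same_local_comp esym hC hC' hw hw').
Qed.

Lemma arm_covers Q x y : Q \in local_comps e z -> arm e z Q x y -> x \in S -> y \in S ->
  covers_end l r z x.
Proof.
move=> hQ [hx hy ezx nzy exy] xS yS.
apply: (arm_covers_end hrep hz xS yS) => //; try exact: local_comps_neq hQ _.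
by apply: contraTneq exy => ->; rewrite eirr.
Qed.

(* An arm blocks its endpoint: no vertex of a non-exterior component shares
   a point with the inner vertex of an arm, or both would lie in the same
   component, which would then be both exterior and non-exterior. *)
Lemma arm_blocks C w Q x y : C \in nonext_comps e z -> w \in C -> w \in S ->
  Q \in local_comps e z -> arm e z Q x y -> x \in S -> ~ share_point l r w x.
Proof.
rewrite inE => /andP [hC hne] hw wS hQ [hx hy _ nzy _] xS hs.
have E := share_point_same_comp hC hQ hw hx wS xS hs.
by move: hne; rewrite E (exteriorP hy nzy).
Qed.

Hypothesis hsub : forall C, C \in nonext_comps e z -> C \subset S.

Lemma unnested_witness C : C \in nonext_comps e z -> ~~ (C \subset nested_in S l r z) ->
  exists w, [/\ w \in C, w \in S & covers_end l r z w].
Proof.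
move=> hC /subsetPn [w hw hwn]; have [wS hcov] := nonext_covers_end hC (hsub hC) hw hwn.
by exists w.
Qed.

Lemma nonext_local C : C \in nonext_comps e z -> C \in local_comps e z.
Proof. by rewrite inE => /andP []. Qed.

(* With one arm blocking one endpoint of I_z, all non-exterior components
   that are not nested in z use the other endpoint, hence coincide. *)
Lemma unnested_comp_unique Q x y C C' : Q \in local_comps e z -> arm e z Q x y ->
  x \in S -> y \in S -> C \in nonext_comps e z -> C' \in nonext_comps e z ->
  ~~ (C \subset nested_in S l r z) -> ~~ (C' \subset nested_in S l r z) -> C = C'.
Proof.
move=> hQ harm xS yS hC hC' /(unnested_witness hC) [w [hw wS cw]].
move=> /(unnested_witness hC') [w' [hw' w'S cw']].
have cx := arm_covers hQ harm xS yS.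
case: (covers_end_pigeon cw cw' cx) => [hs|hs|hs].
- exact: share_point_same_comp (nonext_local hC) (nonext_local hC') hw hw' wS w'S hs.
- by case: (arm_blocks hC' hw' w'S hQ harm xS hs).
- by case: (arm_blocks hC hw wS hQ harm xS hs).
Qed.

(* Arms in two different components block both endpoints of I_z, so every
   non-exterior component is nested in z. *)
Lemma two_arms_nested Q x y Q2 x2 y2 C : Q \in local_comps e z -> arm e z Q x y ->
  x \in S -> y \in S -> Q2 \in local_comps e z -> arm e z Q2 x2 y2 -> x2 \in S -> y2 \in S ->
  Q2 != Q -> C \in nonext_comps e z -> C \subset nested_in S l r z.
Proof.
move=> hQ harm xS yS hQ2 harm2 x2S y2S hQQ hC; apply: contraNT hQQ.
move=> /(unnested_witness hC) [w [hw wS cw]].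
have cx := arm_covers hQ harm xS yS; have cx2 := arm_covers hQ2 harm2 x2S y2S.
have [hx _ _ _ _] := harm; have [hx2 _ _ _ _] := harm2.
case: (covers_end_pigeon cw cx cx2) => [hs|hs|hs].
- by case: (arm_blocks hC hw wS hQ harm xS hs).
- by rewrite (share_point_same_comp hQ hQ2 hx hx2 xS x2S hs).
- by case: (arm_blocks hC hw wS hQ2 harm2 x2S hs).
Qed.

(* If only one component at z is exterior,
   at most one non-exterior component escapes I_z, and wt z omits one. *)
Lemma wt_le_imp_at Q x y Q2 x2 y2 : Q \in local_comps e z -> arm e z Q x y ->
  x \in S -> y \in S -> Q2 \in local_comps e z -> arm e z Q2 x2 y2 -> x2 \in S -> y2 \in S ->
  (Q2 = Q -> local_comps e z \subset nonext_comps e z :|: [set Q]) ->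
  wt e z <= imp_at S l r z.
Proof.
move=> hQ harm xS yS hQ2 harm2 x2S y2S hone.
set D := nonext_comps e z; set D' := [set C in D | ~~ (C \subset nested_in S l r z)].
have D'D : D' \subset D by apply/subsetP => C; rewrite inE => /andP [].
have nested_part : \sum_(C in D :\: D') #|C| <= imp_at S l r z.
  apply: nested_comps_sum_le.
    by apply/subsetP => C; rewrite in_setD => /andP [_ /nonext_local].
  move=> C; rewrite in_setD [C \in D']inE => /andP [hC' hC].
  by move: hC'; rewrite hC negbK.
have split : \sum_(C in D) #|C| = \sum_(C in D') #|C| + \sum_(C in D :\: D') #|C|.
  by rewrite (big_setID D') (setIidPr D'D).
suff : wt e z + \sum_(C in D') #|C| <= \sum_(C in D) #|C|.
  by rewrite split addnC leq_add2l => /leq_trans; apply.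

case: (set_0Vmem D') => [-> | [C0 hC0]].
  by rewrite big_set0 addn0; exact: wt_le_nonext_sum.
have inD' C : C \in D' -> C \in D /\ ~~ (C \subset nested_in S l r z).
  by rewrite inE => /andP.
have [hC0D hC0n] := inD' C0 hC0.
have QQ : Q2 = Q.
  apply/eqP; apply: contraNT hC0n => hQQ.
  exact: two_arms_nested hQ harm xS yS hQ2 harm2 x2S y2S hQQ hC0D.
have -> : D' = [set C0].
  apply/setP => C; rewrite inE; apply/idP/eqP => [/inD' [hCD hCn] | ->] //.
  exact: unnested_comp_unique hQ harm xS yS hCD hC0D hCn hC0n.
rewrite big_set1; apply: wt_add_le_nonext_sum hC0D.
apply: leq_trans (subset_leq_card (hone QQ)) _.
by rewrite setUC cardsU1 addnC leq_add2l leq_b1.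
Qed.

End Bound.

Section Impropriety.
Variables (T : finType) (e : rel T).

Lemma has_imp_unique S q1 q2 : has_imp S e q1 -> has_imp S e q2 -> q1 = q2.
Proof.
move=> [[l1 [r1 [h1 <-]]] m1] [[l2 [r2 [h2 <-]]] m2].
by apply/eqP; rewrite eqn_leq m1 // m2.
Qed.

Lemma has_imp_exists S : (exists l r, is_rep S e l r) -> exists q, has_imp S e q.
Proof.
move=> [l [r hlr]].
have [q [[[l' [r' [hrep <-]]] hmin] _]] :=
  @dec_inh_nat_subset_has_unique_least_element
    (fun n => exists l r, is_rep S e l r /\ imp_rep S l r = n) (fun n => classic _)
    (ex_intro _ _ (ex_intro _ l (ex_intro _ r (conj hlr erefl)))).
exists (imp_rep S l' r'); split; first by exists l', r'.
by move=> l1 r1 h1; apply/leP; apply: hmin; exists l1, r1.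
Qed.

Lemma rep_restrict (S : {set T}) l r : is_rep [set: T] e l r -> is_rep S e l r.
Proof.
case=> h1 h2; split; first by move=> v _; apply: h1; rewrite inE.
by move=> v w _ _ hvw; apply: h2; rewrite ?inE.
Qed.

Lemma critical_proper_lt p (S : {set T}) k : critical e p -> interval_graph e -> S \proper [set: T] ->
  (forall l r, is_rep S e l r -> k <= imp_rep S l r) -> k < p.
Proof.
move=> [_ [_ hcrit]] [l [r hrep]] hS hk.
have [q hq] := has_imp_exists (ex_intro _ l (ex_intro _ r (rep_restrict S hrep))).
have [[l' [r' [hrep' hq']]] _] := hq.
by rewrite (leq_ltn_trans (hk _ _ hrep')) // hq' (hcrit S hS q hq).
Qed.

End Impropriety.

Section Basepoint.
Variables (T : finType) (e : rel T) (p : nat).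
Hypotheses (esym : symmetric e) (eirr : irreflexive e) (hconn : connected_graph e).
Hypotheses (hcrit : critical e p) (hint : interval_graph e).

(* Deleting from G everything in the arm components except the arm vertices
   leaves a proper induced subgraph, to which wt_le_imp_at applies; this
   contradicts criticality when wt z = p. *)
Lemma arms_contradict z Q a b Q2 x2 y2 w0 : wt e z = p ->
  Q \in local_comps e z -> arm e z Q a b -> Q2 \in local_comps e z -> arm e z Q2 x2 y2 ->
  (Q2 = Q -> local_comps e z \subset nonext_comps e z :|: [set Q]) ->
  w0 \in Q -> w0 \notin [set a; b; x2; y2] -> False.
Proof.
move=> hwt hQ harm hQ2 harm2 hone hw0 hw0n.
set S := ~: ((Q :|: Q2) :\: [set a; b; x2; y2]).
have inS w : w \in S = (w \in Q :|: Q2) ==> (w \in [set a; b; x2; y2]).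
  by rewrite in_setC in_setD negb_and negbK orbC implybE.
have keep w : w \in [set a; b; x2; y2] -> w \in S by rewrite inS => ->; rewrite implybT.
have outside C Q' a' b' w : C \in nonext_comps e z -> Q' \in local_comps e z ->
    arm e z Q' a' b' -> w \in C -> w \notin Q'.
  rewrite inE => /andP [hC hne] hQ' [_ hb' _ nzb' _] hw; apply: contraNN hne => hwQ'.
  by rewrite (same_local_comp esym hC hQ' hw hwQ' (or_introl erefl)) (exteriorP hb' nzb').
have zout Q' : Q' \in local_comps e z -> z \notin Q'.
  by move=> hQ'; apply: contraTN isT => /(local_comps_neq hQ'); rewrite eqxx.
have zS : z \in S by rewrite inS in_setU (negbTE (zout _ hQ)) (negbTE (zout _ hQ2)).
have hsub C : C \in nonext_comps e z -> C \subset S.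
  move=> hC; apply/subsetP => w hw.
  by rewrite inS in_setU (negbTE (outside _ _ _ _ _ hC hQ harm hw))
    (negbTE (outside _ _ _ _ _ hC hQ2 harm2 hw)).
have Sproper : S \proper [set: T].
  rewrite properT; apply/eqP => /setP /(_ w0).
  by rewrite inS in_setT in_setU hw0 /= (negbTE hw0n).
suff : p < p by rewrite ltnn.
apply: (critical_proper_lt hcrit hint Sproper) => l r hrep.
rewrite -{1}hwt; apply: leq_trans (leq_bigmax_cond _ zS).
apply: (wt_le_imp_at esym eirr hrep zS hsub hQ harm _ _ hQ2 harm2) => //;
  by apply: keep; rewrite !inE eqxx ?orbT.
Qed.

(* Otherwise it has
   an arm and, having at least three vertices, a vertex off that arm;
   together with an arm of a second exterior component, if there is one,
   this contradicts criticality. *)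
Lemma heavy_comp_nonext z z' : wt e z = p -> z' != z -> 0 < wt e z' ->
  ~~ exterior e z (local_comp e z z').
Proof.
move=> hwt zz' hpos; set Q := local_comp e z z'; apply/negP => /exists_inP [y hyQ nzy].
have hQ : Q \in local_comps e z by exact: local_comp_in.
have [a [b harm]] := exterior_arm esym hconn hQ hyQ nzy.
have [w0 hw0 hw0n] : exists2 w0, w0 \in Q & w0 \notin [set a; b].
  apply/subsetPn; apply: contraTN (comp_of_heavy_card esym hconn zz' hpos).
  rewrite -leqNgt => /subset_leq_card /leq_trans; apply.
  by rewrite cards2; case: (a != b).
case: (boolP [exists Q2 in local_comps e z, (Q2 != Q) && exterior e z Q2]).
  move=> /exists_inP [Q2 hQ2 /andP [hQQ /exists_inP [y2 hy2 nzy2]]].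
  have [x2 [y2' harm2]] := exterior_arm esym hconn hQ2 hy2 nzy2.
  apply: (arms_contradict hwt hQ harm hQ2 harm2 _ hw0).
    by move=> E; rewrite E eqxx in hQQ.
  have [hx2 hy2' _ _ _] := harm2.
  have offQ w : w \in Q2 -> w0 != w.
    apply: contraTneq => <-; apply: contra hQQ => hw0Q2.
    by rewrite (same_local_comp esym hQ hQ2 hw0 hw0Q2 (or_introl erefl)).
  by move: hw0n; rewrite !inE (negbTE (offQ _ hx2)) (negbTE (offQ _ hy2')) !orbF.
rewrite negb_exists_in => /forall_inP hno.
apply: (arms_contradict hwt hQ harm hQ harm _ hw0); last first.
  by move: hw0n; rewrite !inE; case: (w0 == a); case: (w0 == b).
move=> _; apply/subsetP => C hC; rewrite !inE hC /=.
case: (eqVneq C Q) => [_ | hCQ]; first by rewrite orbT.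
by move: (hno C hC); rewrite hCQ orbF.
Qed.

End Basepoint.

Theorem theorem3p2 (T : finType) (e : rel T) (p : nat) :
  symmetric e -> irreflexive e ->
  interval_graph e -> connected_graph e ->
  balanced e -> critical e p ->
  exists! z : T, basepoint e z.
Proof.
move=> esym eirr hint hconn hbal hcrit.
have [hp0 [himp _]] := hcrit.
have wtG_p : wtG e = p := has_imp_unique hbal himp.
have hT : 0 < #|T|.
  rewrite lt0n; apply: contraTneq hp0 => /card0_eq hT0.
  by rewrite -wtG_p /wtG big_pred0.
have [z0 hz0] := eq_bigmax (fun z => wt e z) hT.
rewrite -/(wtG e) wtG_p in hz0; symmetry in hz0.
exists z0; split; first by split; rewrite // hz0.
move=> z' [_ hz']; have wz' : wt e z' = p := has_imp_unique hz' himp.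
apply/eqP; apply: contraT => zz'; rewrite eq_sym in zz'.
have nonext := heavy_comp_nonext esym eirr hconn hcrit hint hz0 zz' (ltac:(by rewrite wz')).
by move: hp0; rewrite -wz' (wt_nonext_cross esym hconn zz' nonext).
Qed.
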